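(* Let $n\ge 1$, $t\ge 0$, $\ell\ge 1$ be integers with $n\ge 3t+1$. The adapted COOL protocol described in the context solves Byzantine broadcast on $\ell$-bit messages error-free: in every execution, against every adversary (of unbounded computational power, with no cryptographic assumptions) controlling at most $t$ processors (possibly including the leader), it satisfies termination, consistency and broadcast validity. Moreover it uses $O(t)$ rounds and a total of $O(\max\{n\ell,\ nt\log t\})$ communicated bits.
   Context: Setting. There are $n$ processors indexed by $[1:n]$; every two are joined by a reliable private channel, communication is synchronous (in rounds), and each recipient knows the sender of every message. At most $t$ processors are dishonest, controlled by a Byzantine adversary of unbounded computational power that knows everything and may make them deviate arbitrarily (missing values are replaced by a fixed default). One designated processor, the leader, holds an $\ell$-bit message $\boldsymbol M$. $\phi$ denotes a default value different from every $\ell$-bit message. Logarithms are base 2. Byzantine broadcast requirements: termination (every honest processor eventually outputs a message and terminates), consistency (all honest processors output the same message), validity (if the leader is honest, every honest processor outputs $\boldsymbol M$). Error-free means these hold in every execution. Adapted COOL: in a first round the leader sends an $\ell$-bit message to every processor (an honest leader sends $\boldsymbol M$); each processor $i$ takes the message received (a fixed default if none) as its initial message $\boldsymbol w_i$; then all processors run COOL, described next. Code. Let $k=\lfloor t/5\rfloor+1$ and $c=\lceil \max\{\ell,(t/5+1)\log(n+1)\}/k\rceil$ (so $n\le 2^c-1$). Messages are zero-padded to $kc$ bits and regarded as vectors in $GF(2^c)^k$. Integers in $[1:n]$ are identified with distinct nonzero elements of $GF(2^c)$, and $\boldsymbol h_i\in GF(2^c)^k$ has entries $h_{i,j}=\prod_{p\in[1:k],\,p\ne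 j}\frac{i-p}{j-p}$ computed in $GF(2^c)$. Core protocol (all $n$ processors; honest processor $i$). Initialization: $\boldsymbol w^{(i)}:=\boldsymbol w_i$, $y^{(i)}_j:=\boldsymbol h_j^{\mathsf T}\boldsymbol w_i$, $u_i(i):=1$. Phase 1. (a) Send $(y^{(i)}_j,y^{(i)}_i)$ to each $j\ne i$. (b) For $j\ne i$, $u_i(j):=1$ if the pair received from $j$ equals $(y^{(i)}_i,y^{(i)}_j)$, else $0$. Set $s_i:=1$ if $\sum_j u_i(j)\ge n-t$; otherwise $s_i:=0$ and $\boldsymbol w^{(i)}:=\phi$. (c) Send $s_i$ to all; each processor records the indicator received from each $j$ (its own for itself) and forms $\mathcal S_1=\{j:s_j=1\}$, $\mathcal S_0=\{j:s_j=0\}$. Phase 2. If $s_i=1$: set $u_i(j):=0$ for $j\in\mathcal S_0$; if now $\sum_j u_i(j)<n-t$, set $s_i:=0$, $\boldsymbol w^{(i)}:=\phi$, send $s_i=0$ to all. Everyone updates recorded indicators and $\mathcal S_0,\mathcal S_1$. Phase 3. Repeat Phase 2 once more. Vote $v_i:=1$ if recorded $\sum_j s_j\ge 2t+1$, else $0$. Run on the votes a deterministic error-free binary Byzantine agreement protocol for $t<n/3$ with $O(nt)$ bits and $O(t)$ rounds (e.g. Berman–Garay–Perry or Coan–Welch). If the decision is $0$, output $\phi$ and stop. Phase 4 (decision 1). If $s_i=0$: replace $y^{(i)}_i$ by the most frequent first component of the Phase-1 pairs received from $j\in\mathcal S_1$; send it to every $j\in\mathcal S_0\setminus\{i\}$;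 with $z_i=y^{(i)}_i$, $z_j$ the value received in Phase 4 for $j\in\mathcal S_0\setminus\{i\}$, $z_j$ the second component of the Phase-1 pair for $j\in\mathcal S_1$, set $\boldsymbol w^{(i)}$ to a message $\boldsymbol x$ with $\boldsymbol h_j^{\mathsf T}\boldsymbol x=z_j$ for at least $n-t$ indices ($\phi$ if none). If $s_i=1$, keep $\boldsymbol w^{(i)}$. Output $\boldsymbol w^{(i)}$. COOL in general: if $n\le Ct$ for a fixed constant $C$, COOL is the core protocol; otherwise the processors of $Q=[1:3t+1]$ run the core protocol among themselves (with $n$ replaced by $n'=3t+1$), then each $i\in Q$ sends $\boldsymbol h_i^{\mathsf T}\boldsymbol w^{(i)}$ of its output (a marker if $\phi$) to every processor outside $Q$, which outputs the message consistent with the values of at least $n'-t$ processors of $Q$ (or $\phi$ on at least $n'-t$ markers). *)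

From mathcomp Require Import all_boot all_order all_algebra.
Import GRing.Theory.
Local Open Scope ring_scope.

Definition msg (l : nat) := (l.-tuple bool)%type.

(* c = ceil(max{l, (t/5+1) log2(n+1)} / k), k = floor(t/5)+1, computed exactly:
   the least c with  k*c >= l  and  k*c >= (t/5+1) log2(n+1),
   the latter being equivalent to 2^(5kc) >= (n+1)^(t+5).  The search bound
   l + (t+5)(n+1) always contains a solution. *)
Definition kpar (t : nat) : nat := (t %/ 5 + 1)%N.
Definition cval (n t l : nat) : nat :=
  find (fun c => (l <= kpar t * c) && ((n.+1) ^ (t + 5) <= 2 ^ (5 * kpar t * c)))%N
       (iota 0 (l + (t + 5) * n.+1).+1).

(* Messages sent by dishonest processors in the core protocol.
   Convention: [aX A j i] is what (dishonest) sender j sends to receiver i. *)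
Record CoreAdv (F : Type) (P : finType) := {
  a1  : P -> P -> (F * F)%type;
  a1c : P -> P -> bool;
  a2  : P -> P -> bool;            (* Phase 2: true = sends "s = 0" *)
  a3  : P -> P -> bool;            (* Phase 3: true = sends "s = 0" *)
  a4  : P -> P -> F
}.

Arguments a1 {F P}. Arguments a1c {F P}. Arguments a2 {F P}. Arguments a3 {F P}. Arguments a4 {F P}.

Section Core.
(* F = GF(2^c); k = dimension; P = participating processors, [num i] its
   0-based index (paper index num i + 1), identified with field element
   alpha (num i); p in [1:k] is identified with alpha (p-1). *)
Variables (F : finFieldType) (k l t : nat) (P : finType) (num : P -> nat)
  (alpha : nat -> F) (enc : msg l -> 'rV[F]_k) (B : {set P}).

Definition hcoef (i : nat) (j : 'I_k) : F :=
  \prod_(p < k | p != j) ((alpha i - alpha p) / (alpha j - alpha p)).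

Definition ev (i : P) (x : msg l) : F := \sum_(j < k) hcoef (num i) j * enc x 0 j.

Variables (w0 : P -> msg l) (A : CoreAdv F P).

Definition yv (i j : P) : F := ev j (w0 i).
Definition recv1 (i j : P) : (F * F)%type :=
  if j \in B then a1 A j i else (yv j i, yv j j).
Definition u1 (i j : P) : bool := (j == i) || (recv1 i j == (yv i i, yv i j)).
Definition s1 (i : P) : bool := (#|P| - t <= #|[set j | u1 i j]|)%N.
Definition rec1 (i j : P) : bool :=
  if j == i then s1 i else if j \in B then a1c A j i else s1 j.
Definition u2 (i j : P) : bool := u1 i j && rec1 i j.
Definition s2 (i : P) : bool := s1 i && (#|P| - t <= #|[set j | u2 i j]|)%N.
Definition notif2 (j i : P) : bool := if j \in B then a2 A j i else s1 j && ~~ s2 j.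
Definition rec2 (i j : P) : bool := if j == i then s2 i else rec1 i j && ~~ notif2 j i.
Definition u3 (i j : P) : bool := u2 i j && rec2 i j.
Definition s3 (i : P) : bool := s2 i && (#|P| - t <= #|[set j | u3 i j]|)%N.
Definition notif3 (j i : P) : bool := if j \in B then a3 A j i else s2 j && ~~ s3 j.
Definition rec3 (i j : P) : bool := if j == i then s3 i else rec2 i j && ~~ notif3 j i.
Definition vote (i : P) : bool := (2 * t + 1 <= #|[set j | rec3 i j]|)%N.

(* the binary BA on the votes: any outcome d satisfying (agreement, built in
   since d is a single value, and) validity *)
Definition ba_ok (d : bool) : Prop :=
  forall b : bool, (forall i, i \notin B -> vote i = b) -> d = b.

Definition freq (i : P) (v : F) : nat := #|[set j | rec3 i j && ((recv1 i j).1 == v)]|.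
Definition fix4 (i : P) : F := odflt 0 [pick v | [forall v', (freq i v' <= freq i v)%N]].
Definition recv4 (i j : P) : F := if j \in B then a4 A j i else fix4 j.
Definition z4 (i j : P) : F :=
  if j == i then fix4 i else if rec3 i j then (recv1 i j).2 else recv4 i j.
Definition decode4 (i : P) : option (msg l) :=
  [pick x : msg l | (#|P| - t <= #|[set j | ev j x == z4 i j]|)%N].

Variable d : bool.
(* output of (honest) processor i; None = phi *)
Definition core_out (i : P) : option (msg l) :=
  if d then (if s3 i then Some (w0 i) else decode4 i) else None.

(* bits sent by honest processors (field elements cost c bits, indicators 1
   bit), plus [bab] bits for the BA sub-protocol *)
Definition core_bits (c bab : nat) : nat :=
  (\sum_(i in P | i \notin B)
     ((#|P| - 1) * (2 * c) + (#|P| - 1)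
      + (if s1 i && ~~ s2 i then #|P| - 1 else 0)
      + (if s2 i && ~~ s3 i then #|P| - 1 else 0)
      + (if d && ~~ s3 i then c * #|[set j | ~~ rec3 i j & j != i]| else 0)) + bab)%N.
End Core.

(* Subcommittee Q = [1:3t+1] (0-based: indices < 3t+1) *)
Definition Qt (n t : nat) : finType := {i : 'I_n | (i < 3 * t + 1)%N}.

(* number of participants of the core protocol, and the field exponent *)
Definition cool_m (n t C : nat) : nat := if (n <= C * t)%N then n else (3 * t + 1)%N.
Definition cool_c (n t l C : nat) : nat := cval (cool_m n t C) t l.

Record CoolAdv (F : Type) (n t l : nat) := {
  a0   : 'I_n -> msg l;                 (* leader's first-round message, if leader dishonest *)
  advN : CoreAdv F 'I_n;                 (* core among all processors (n <= C t) *)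
  advQ : CoreAdv F (Qt n t);             (* core among Q (n > C t) *)
  a5   : Qt n t -> 'I_n -> option F      (* value (None = marker) from q in Q to outsider *)
}.

Arguments a0 {F n t l}. Arguments advN {F n t l}. Arguments advQ {F n t l}. Arguments a5 {F n t l}.

Section Cool.
Variables (n t l C : nat) (L : 'I_n) (M : msg l) (B : {set 'I_n})
  (F : finFieldType) (alpha : nat -> F) (enc : msg l -> 'rV[F]_(kpar t))
  (adv : CoolAdv F n t l).

Definition w0 (i : 'I_n) : msg l := if L \in B then a0 adv i else M.

Definition BQ : {set Qt n t} := [set q | val q \in B].
Definition w0Q (q : Qt n t) : msg l := w0 (val q).
Definition numQ (q : Qt n t) : nat := val (val q).

Definition cool_ba_ok (d : bool) : Prop :=
  if (n <= C * t)%N then @ba_ok F (kpar t) l t 'I_n (fun i : 'I_n => nat_of_ord i) alpha enc B w0 (advN adv) d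
  else @ba_ok F (kpar t) l t (Qt n t) numQ alpha enc BQ w0Q (advQ adv) d.

Variable d : bool.

Definition coreQ_out : Qt n t -> option (msg l) :=
  @core_out F (kpar t) l t (Qt n t) numQ alpha enc BQ w0Q (advQ adv) d.

Definition outsider_out (i : 'I_n) : option (msg l) :=
  let recv q := if val q \in B then a5 adv q i
                else omap (@ev F (kpar t) l (Qt n t) numQ alpha enc q) (coreQ_out q) in
  [pick x : msg l | (#|Qt n t| - t <= #|[set q | recv q == Some (@ev F (kpar t) l (Qt n t) numQ alpha enc q x)]|)%N].

Definition cool_out (i : 'I_n) : option (msg l) :=
  if (n <= C * t)%N then @core_out F (kpar t) l t 'I_n (fun i : 'I_n => nat_of_ord i) alpha enc B w0 (advN adv) d i
  else match insub i with
       | Some q => coreQ_out q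
       | None => outsider_out i
       end.

Variables (baRounds baBits : nat -> nat -> nat).

(* rounds: leader round, Phase 1 (2 rounds), Phase 2, Phase 3, BA, Phase 4,
   and (subcommittee variant) the final dissemination round *)
Definition cool_rounds : nat :=
  if (n <= C * t)%N then (6 + baRounds n t)%N else (7 + baRounds (3 * t + 1) t)%N.

Definition cool_bits : nat :=
  ((if L \in B then 0 else l * (n - 1))
   + if (n <= C * t)%N then
       @core_bits F (kpar t) l t 'I_n (fun i : 'I_n => nat_of_ord i) alpha enc B w0 (advN adv) d
         (cool_c n t l C) (baBits n t)
     else
       @core_bits F (kpar t) l t (Qt n t) numQ alpha enc BQ w0Q (advQ adv) d (cool_c n t l C) (baBits (3 * t + 1) t)
       + \sum_(q in Qt n t | val q \notin B) (cool_c n t l C + 1) * (n - (3 * t + 1)))%N.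
End Cool.

(* Messages are compared through a Reed-Solomon code of dimension k = t/5 + 1 evaluated
   at distinct points, so two distinct messages share at most t/5 symbols. An honest
   processor passing Phase 1 has at least n - t - |B| honest supporters whose own symbol
   agrees with its message; three such families do not fit among the honest processors,
   so at most two messages a, b survive Phase 1. An honest processor passing Phase 3 with
   message a then has a supporter p that holds a, passed Phase 2 and has different
   symbols for a and b, so all honest supporters of p hold a. Two honest Phase-3
   survivors with different messages would thus give two disjoint sets of n - t - |B|
   honest holders, impossible for n >= 3t + 1. If the agreement decides 1, some honest
   processor voted 1, so more than t honest processors passed Phase 3, all with the same
   message: every other honest processor recovers its own symbol by plurality and decodes
   the message from its at least n - t correct symbols, and the outsiders decode the
   committee's symbols the same way. The costs follow from c = O(l/t + log t), as the core
   protocol runs on n <= C t or on 3t + 1 processors. *)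

From Pilot Require Import Defs.
From mathcomp Require Import all_boot all_order all_algebra.
From mathcomp Require Import zify.
Import GRing.Theory.

Set Implicit Arguments.
Unset Strict Implicit.
Unset Printing Implicit Defensive.

Lemma card_honest_part (T : finType) (S : {set T}) (p : pred T) :
  #|[set j | p j]| <= #|[set j | (j \notin S) && p j]| + #|S|.
Proof.
apply: leq_trans (leq_of_leqif (leq_card_setU _ S)).
by apply: subset_leq_card; apply/subsetP => j; rewrite !inE; case: (j \in S) => //= ->.
Qed.

Lemma pick_argmax_eq (T : finType) (f : T -> nat) (v x0 : T) :
  (forall w, w != v -> f w < f v) ->
  odflt x0 [pick w | [forall w', f w' <= f w]] = v.
Proof.
move=> fv_max; case: pickP => [w /forallP w_max | no_max] /=.
  by apply/eqP; apply: contraT => /fv_max; rewrite ltnNge w_max.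
case/negP: (negbT (no_max v)); apply/forallP => w'.
by case: (eqVneq w' v) => [-> // | /fv_max /ltnW].
Qed.

Section ThresholdDecoding.
Variables (P X : finType) (Y : eqType) (code : P -> X -> Y) (B : {set P}) (t : nat).
Hypotheses (B_le : #|B| <= t) (P_ge : 3 * t + 1 <= #|P|).
Hypothesis code_agree : forall x y, x != y -> #|[set p | code p x == code p y]| <= t %/ 5.

Lemma threshold_decode_codeword (z : P -> Y) (x0 : X) :
  (forall p, p \notin B -> z p = code p x0) ->
  [pick x | #|P| - t <= #|[set p | code p x == z p]|] = Some x0.
Proof.
move=> z_honest; case: pickP => [x x_ok | no_x].
  congr Some; apply/eqP; apply: contraT => x_neq.
  have agree := code_agree x_neq.
  have honest_agree : #|[set p | (p \notin B) && (code p x == z p)]|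
                      <= #|[set p | code p x == code p x0]|.
    apply: subset_leq_card; apply/subsetP => p; rewrite !inE => /andP [p_h].
    by rewrite z_honest.
  have := card_honest_part B (fun p => code p x == z p); lia.
case/negP: (negbT (no_x x0)); apply: leq_trans (_ : #|~: B| <= _).
  by rewrite cardsCs setCK; lia.
by apply: subset_leq_card; apply/subsetP => p; rewrite !inE => /z_honest ->.
Qed.

Lemma threshold_decode_none (z : P -> Y) :
  (forall p x, p \notin B -> code p x != z p) ->
  [pick x | #|P| - t <= #|[set p | code p x == z p]|] = None.
Proof.
move=> z_honest; case: pickP => [x x_ok | //]; exfalso.
have : #|[set p | code p x == z p]| <= #|B|.
  apply: subset_leq_card; apply/subsetP => p; rewrite !inE.
  by apply: contraLR => /z_honest ->.
lia.
Qed.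

End ThresholdDecoding.

Lemma card_roots_lt (F : idomainType) (T : finType) (R : {poly F}) (f : T -> F) :
  R != 0%R -> injective f -> #|[set p | root R (f p)]| < size R.
Proof.
move=> R_neq0 f_inj; rewrite cardE -(size_map f).
apply: max_poly_roots R_neq0 _ _; last by rewrite map_inj_uniq ?enum_uniq.
by apply/allP => z /mapP [p]; rewrite mem_enum inE => root_p ->.
Qed.

Section ReedSolomon.
Variables (F : finFieldType) (k m : nat) (alpha : nat -> F).
Hypotheses (alpha_inj : {in [pred i | i < m] &, injective alpha}) (k_le_m : k <= m).
Local Open Scope ring_scope.

Definition lagrange_basis (j : 'I_k) : {poly F} :=
  \prod_(p < k | p != j) (alpha j - alpha p)^-1 *: \prod_(p < k | p != j) ('X - (alpha p)%:P).

(* The symbol h_i^T v is the value at alpha i of the polynomial of degree < k interpolating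
   v at alpha 0, ..., alpha (k - 1). *)
Definition rs_poly (v : 'rV[F]_k) : {poly F} := \sum_(j < k) v 0 j *: lagrange_basis j.

Lemma horner_lagrange_basis i j : (lagrange_basis j).[alpha i] = hcoef F k alpha i j.
Proof.
rewrite hornerZ horner_prod /hcoef -big_split /=.
by apply: eq_bigr => p _; rewrite hornerXsubC mulrC.
Qed.

Lemma size_lagrange_basis j : (size (lagrange_basis j) <= k)%N.
Proof.
apply: leq_trans (size_scale_leq _ _) _.
rewrite -big_filter size_prod_XsubC; case: big_enumP => e _ _ [_ ->].
rewrite cardC1 card_ord.
by case: k j => [[]|].
Qed.

Lemma hcoef_node (i j : 'I_k) : hcoef F k alpha i j = (i == j)%:R.
Proof.
have alpha_k_inj (p q : 'I_k) : alpha p = alpha q -> p = q.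
  by move=> /alpha_inj eq_pq; apply/val_inj/eq_pq; rewrite inE (leq_trans (ltn_ord _) k_le_m).
rewrite /hcoef; case: eqP => [-> | i_neq].
  by apply: big1 => p p_neq; rewrite divff // subr_eq0; apply: contra p_neq => /eqP /alpha_k_inj ->.
by rewrite (bigD1 i) /=; [rewrite subrr !mul0r | apply/eqP].
Qed.

Lemma horner_rs_poly v i : (rs_poly v).[alpha i] = \sum_(j < k) hcoef F k alpha i j * v 0 j.
Proof.
by rewrite horner_sum; apply: eq_bigr => j _; rewrite hornerZ horner_lagrange_basis mulrC.
Qed.

Lemma size_rs_poly v : (size (rs_poly v) <= k)%N.
Proof.
apply: leq_trans (size_sum _ _ _) _; apply/bigmax_leqP => j _.
exact: leq_trans (size_scale_leq _ _) (size_lagrange_basis j).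
Qed.

Lemma rs_poly_node v (i : 'I_k) : (rs_poly v).[alpha i] = v 0 i.
Proof.
rewrite horner_rs_poly (bigD1 i) //= hcoef_node eqxx mul1r big1 ?addr0 //.
by move=> j j_neq; rewrite hcoef_node eq_sym (negbTE j_neq) mul0r.
Qed.

Lemma rs_polyB v w : rs_poly (v - w) = rs_poly v - rs_poly w.
Proof.
by rewrite /rs_poly -sumrB; apply: eq_bigr => j _; rewrite !mxE scalerBl.
Qed.

Lemma rs_poly_inj : injective rs_poly.
Proof.
move=> v w /eqP; rewrite -subr_eq0 -rs_polyB => /eqP vw0.
apply/rowP => j; apply/eqP; rewrite -subr_eq0.
by have := rs_poly_node (v - w) j; rewrite vw0 horner0 !mxE => <-.
Qed.

Lemma rs_agreement (T : finType) (a : T -> nat) (v w : 'rV[F]_k) :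
  (forall p, (a p < m)%N) -> injective a -> v != w ->
  (#|[set p | (rs_poly v).[alpha (a p)] == (rs_poly w).[alpha (a p)]]| < k)%N.
Proof.
move=> a_lt a_inj vw; have diff_neq0 : rs_poly (v - w) != 0.
  by apply: contra vw; rewrite -(inj_eq rs_poly_inj) rs_polyB subr_eq0.
have alpha_a_inj : injective (fun p => alpha (a p)).
  by move=> p q /alpha_inj eq_pq; apply: a_inj; apply: eq_pq; rewrite inE.
apply: leq_trans _ (leq_trans (card_roots_lt diff_neq0 alpha_a_inj) (size_rs_poly _)).
rewrite ltnS; apply/subset_leq_card/subsetP => p.
by rewrite !inE /root rs_polyB hornerD hornerN subr_eq0.
Qed.

End ReedSolomon.

Section CoreProtocol.
Variables (F : finFieldType) (k l t : nat) (P : finType) (num : P -> nat)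
  (alpha : nat -> F) (enc : msg l -> 'rV[F]_k) (B : {set P}) (w0 : P -> msg l)
  (A : CoreAdv F P) (d : bool).

Local Notation ev := (ev F k l P num alpha enc).
Local Notation u1 := (u1 F k l P num alpha enc B w0 A).
Local Notation s1 := (s1 F k l t P num alpha enc B w0 A).
Local Notation rec1 := (rec1 F k l t P num alpha enc B w0 A).
Local Notation s2 := (s2 F k l t P num alpha enc B w0 A).
Local Notation rec2 := (rec2 F k l t P num alpha enc B w0 A).
Local Notation u3 := (u3 F k l t P num alpha enc B w0 A).
Local Notation s3 := (s3 F k l t P num alpha enc B w0 A).
Local Notation rec3 := (rec3 F k l t P num alpha enc B w0 A).
Local Notation freq := (freq F k l t P num alpha enc B w0 A).
Local Notation fix4 := (fix4 F k l t P num alpha enc B w0 A).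
Local Notation z4 := (z4 F k l t P num alpha enc B w0 A).
Local Notation decode4 := (decode4 F k l t P num alpha enc B w0 A).
Local Notation vote := (vote F k l t P num alpha enc B w0 A).
Local Notation core_out := (core_out F k l t P num alpha enc B w0 A d).
Local Notation ba_ok := (ba_ok F k l t P num alpha enc B w0 A).

Lemma s1_of_s2 i : s2 i -> s1 i.
Proof. by case/andP. Qed.

Lemma s2_of_s3 i : s3 i -> s2 i.
Proof. by case/andP. Qed.

Lemma rec1_honest i j : j \notin B -> rec1 i j = s1 j.
Proof. by move=> j_h; rewrite /Defs.rec1 (negbTE j_h); case: eqP => [->|]. Qed.

Lemma rec2_honest i j : j \notin B -> rec2 i j = s2 j.
Proof.
move=> j_h; rewrite /Defs.rec2 /Defs.notif2 (negbTE j_h) rec1_honest //.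
by case: eqP => [-> // | _]; case s2j: (s2 j); [rewrite (s1_of_s2 s2j) | case: (s1 j)].
Qed.

Lemma rec3_honest i j : j \notin B -> rec3 i j = s3 j.
Proof.
move=> j_h; rewrite /Defs.rec3 /Defs.notif3 (negbTE j_h) rec2_honest //.
by case: eqP => [-> // | _]; case s3j: (s3 j); [rewrite (s2_of_s3 s3j) | case: (s2 j)].
Qed.

Lemma u1_honest_agree i j : j \notin B -> u1 i j ->
  ev j (w0 j) = ev j (w0 i) /\ ev i (w0 i) = ev i (w0 j).
Proof.
rewrite /Defs.u1 /Defs.recv1 /Defs.yv => /negbTE ->.
by case/orP => [/eqP -> // | /eqP [-> ->]].
Qed.

Lemma u1_same_msg i j : j \notin B -> w0 i = w0 j -> u1 i j.
Proof. by rewrite /Defs.u1 /Defs.recv1 /Defs.yv => /negbTE -> ->; rewrite eqxx orbT. Qed.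

Hypotheses (P_ge : 3 * t + 1 <= #|P|) (B_le : #|B| <= t).
Hypothesis ev_agree : forall x y, x != y -> #|[set p | ev p x == ev p y]| <= t %/ 5.

Lemma honest_threshold (p : pred P) : #|P| - t <= #|[set j | p j]| ->
  #|P| - t - #|B| <= #|[set j | (j \notin B) && p j]|.
Proof. by have := card_honest_part B p; lia. Qed.

Lemma card_honest : #|~: B| = #|P| - #|B|.
Proof. by rewrite cardsCs setCK. Qed.

Definition agreeing (x : msg l) : {set P} := [set p | (p \notin B) && (ev p (w0 p) == ev p x)].

Definition holders (x : msg l) : {set P} := [set p | (p \notin B) && (w0 p == x)].

Lemma agreeing_honest x : agreeing x \subset ~: B.
Proof. by apply/subsetP => p; rewrite !inE => /andP []. Qed.

Lemma holders_agreeing x : holders x \subset agreeing x.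
Proof. by apply/subsetP => p; rewrite !inE => /andP [p_h /eqP ->]; rewrite p_h eqxx. Qed.

Lemma card_agreeingI x y : x != y -> #|agreeing x :&: agreeing y| <= t %/ 5.
Proof.
move=> /ev_agree agree; apply: leq_trans agree; apply/subset_leq_card/subsetP => p.
by rewrite !inE => /andP [/andP [_ /eqP <-] /andP [_ /eqP <-]].
Qed.

Lemma card_agreeing_s1 i : i \notin B -> s1 i -> #|P| - t - #|B| <= #|agreeing (w0 i)|.
Proof.
move=> i_h /honest_threshold supp; apply: leq_trans supp _; apply/subset_leq_card/subsetP => j.
by rewrite !inE => /andP [j_h /(u1_honest_agree j_h) [-> _]]; rewrite j_h eqxx.
Qed.

Lemma no_three_s1_values i1 i2 i3 : i1 \notin B -> i2 \notin B -> i3 \notin B ->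
  s1 i1 -> s1 i2 -> s1 i3 -> w0 i1 != w0 i2 -> w0 i1 != w0 i3 -> w0 i2 != w0 i3 -> False.
Proof.
move=> h1 h2 h3 s1_1 s1_2 s1_3 n12 n13 n23.
have c1 := card_agreeing_s1 h1 s1_1; have c2 := card_agreeing_s1 h2 s1_2.
have c3 := card_agreeing_s1 h3 s1_3.
have e12 := card_agreeingI n12; have e13 := card_agreeingI n13.
have e23 := card_agreeingI n23.
set Y1 := agreeing (w0 i1) in c1 e12 e13 *; set Y2 := agreeing (w0 i2) in c2 e12 e23 *.
set Y3 := agreeing (w0 i3) in c3 e13 e23 *.
have u12 := cardsUI Y1 Y2; have u123 := cardsUI (Y1 :|: Y2) Y3.
have i123 : #|(Y1 :|: Y2) :&: Y3| <= #|Y1 :&: Y3| + #|Y2 :&: Y3|.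
  by rewrite setIUl; apply: leq_of_leqif (leq_card_setU _ _).
have : #|Y1 :|: Y2 :|: Y3| <= #|~: B|.
  by apply: subset_leq_card; rewrite !subUset !agreeing_honest.
rewrite card_honest; lia.
Qed.

Lemma s1_values_pair i j p : i \notin B -> j \notin B -> p \notin B ->
  s1 i -> s1 j -> s1 p -> w0 j != w0 i -> w0 p = w0 i \/ w0 p = w0 j.
Proof.
move=> i_h j_h p_h s1i s1j s1p nji.
case: (eqVneq (w0 p) (w0 i)) => [|npi]; first by left.
case: (eqVneq (w0 p) (w0 j)) => [|npj]; first by right.
by case: (no_three_s1_values i_h j_h p_h s1i s1j s1p); rewrite // eq_sym.
Qed.

Section TwoValues.
Variables (a b : msg l).
Hypothesis a_neq_b : a != b.
Hypothesis s1_values : forall p, p \notin B -> s1 p -> w0 p = a \/ w0 p = b.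

(* An honest [u3]-supporter of a processor holding [a] passed Phase 2 and holds [a], unless it
   holds [b], in which case its own symbols of [a] and [b] agree. *)
Lemma s3_separating_witness i : i \notin B -> s3 i -> w0 i = a ->
  exists p, [/\ p \notin B, s2 p, w0 p = a & ev p a != ev p b].
Proof.
move=> i_h s3i w0i; have /andP [_ /honest_threshold supp] := s3i.
set G2 := holders a :&: [set q | s2 q].
have supp_sub : [set q | (q \notin B) && u3 i q] \subset G2 :|: (agreeing a :&: agreeing b).
  apply/subsetP => q; rewrite !inE => /andP [q_h].
  rewrite /Defs.u3 /Defs.u2 rec2_honest // => /andP [/andP [u1iq _] s2q].
  have [ev_q _] := u1_honest_agree q_h u1iq; rewrite w0i in ev_q.
  rewrite q_h s2q /=; case: (s1_values q_h (s1_of_s2 s2q)) => w0q; rewrite w0q ?eqxx //.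
  by rewrite -w0q ev_q !eqxx orbT.
have card_G2 : #|P| - t - #|B| <= #|G2| + t %/ 5.
  apply: leq_trans (leq_trans supp (subset_leq_card supp_sub)) _.
  apply: leq_trans (leq_of_leqif (leq_card_setU _ _)) _.
  by rewrite leq_add2l card_agreeingI.
have card_G2_b : #|G2 :&: agreeing b| <= t %/ 5.
  apply: leq_trans (card_agreeingI a_neq_b); apply/subset_leq_card/setSI.
  exact: subset_trans (subsetIl _ _) (holders_agreeing a).
have : 0 < #|G2 :\: agreeing b| by have := cardsID (agreeing b) G2; lia.
case/card_gt0P => p; rewrite !inE => /andP [p_nagr /andP [/andP [p_h /eqP w0p] s2p]].
by exists p; split=> //; move: p_nagr; rewrite p_h w0p.
Qed.

Lemma s2_separating_holders p : p \notin B -> s2 p -> w0 p = a -> ev p a != ev p b ->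
  #|P| - t - #|B| <= #|holders a|.
Proof.
move=> p_h s2p w0p sep; have /andP [_ /honest_threshold supp] := s2p.
apply: leq_trans supp _; apply/subset_leq_card/subsetP => q; rewrite !inE => /andP [q_h].
rewrite /Defs.u2 rec1_honest // => /andP [u1pq s1q]; rewrite q_h.
case: (s1_values q_h s1q) => [-> | w0q]; first by rewrite eqxx.
by have [_ ev_p] := u1_honest_agree q_h u1pq; move: sep; rewrite -w0p ev_p w0q eqxx.
Qed.

End TwoValues.

Lemma card_holders_s3 i j : i \notin B -> j \notin B -> s3 i -> s1 j -> w0 j != w0 i ->
  #|P| - t - #|B| <= #|holders (w0 i)|.
Proof.
move=> i_h j_h s3i s1j nji.
have s1_values p : p \notin B -> s1 p -> w0 p = w0 i \/ w0 p = w0 j.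
  by move=> p_h s1p; apply: s1_values_pair i_h j_h p_h (s1_of_s2 (s2_of_s3 s3i)) s1j s1p nji.
have nij : w0 i != w0 j by rewrite eq_sym.
have [p [p_h s2p w0p sep]] := s3_separating_witness nij s1_values i_h s3i erefl.
exact: (s2_separating_holders s1_values p_h s2p w0p sep).
Qed.

Lemma s3_consistent i j : i \notin B -> j \notin B -> s3 i -> s3 j -> w0 i = w0 j.
Proof.
move=> i_h j_h s3i s3j; apply/eqP; apply: contraT => nij.
have nji : w0 j != w0 i by rewrite eq_sym.
have gi := card_holders_s3 i_h j_h s3i (s1_of_s2 (s2_of_s3 s3j)) nji.
have gj := card_holders_s3 j_h i_h s3j (s1_of_s2 (s2_of_s3 s3i)) nij.
have disj : holders (w0 i) :&: holders (w0 j) = set0.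
  apply/setP => p; rewrite !inE; apply/negP => /andP [/andP [_ /eqP w0pi] /andP [_ /eqP w0pj]].
  by move: nij; rewrite -w0pi -w0pj eqxx.
have := cardsUI (holders (w0 i)) (holders (w0 j)); rewrite disj cards0.
have : #|holders (w0 i) :|: holders (w0 j)| <= #|~: B|.
  apply: subset_leq_card; rewrite subUset.
  by rewrite !(subset_trans (holders_agreeing _) (agreeing_honest _)).
rewrite card_honest; lia.
Qed.

Lemma fix4_honest i ws : (forall j, j \notin B -> s3 j -> w0 j = ws) ->
  #|B| < #|[set j | (j \notin B) && s3 j]| -> fix4 i = ev i ws.
Proof.
move=> s3_ws many_s3; apply: pick_argmax_eq => v v_neq.
have freq_v : freq i v <= #|B|.
  apply/subset_leq_card/subsetP => j; rewrite !inE; apply: contraLR => j_h.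
  rewrite rec3_honest // /Defs.recv1 (negbTE j_h) /Defs.yv /=.
  by apply/negP => /andP [s3j /eqP ev_v]; move: v_neq; rewrite -ev_v (s3_ws j j_h s3j) eqxx.
have freq_ws : #|[set j | (j \notin B) && s3 j]| <= freq i (ev i ws).
  apply/subset_leq_card/subsetP => j; rewrite !inE => /andP [j_h s3j].
  by rewrite rec3_honest // s3j /Defs.recv1 (negbTE j_h) /Defs.yv /= (s3_ws j j_h s3j).
exact: leq_ltn_trans freq_v (leq_trans many_s3 freq_ws).
Qed.

Lemma decode4_honest i ws : (forall j, j \notin B -> s3 j -> w0 j = ws) ->
  (forall j, j \notin B -> fix4 j = ev j ws) -> decode4 i = Some ws.
Proof.
move=> s3_ws fix4_ws; apply: (threshold_decode_codeword B_le P_ge ev_agree) => j j_h.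
rewrite /Defs.z4; case: eqP => [<- | _]; first exact: fix4_ws.
rewrite rec3_honest //; case: ifP => [s3j | _]; last by rewrite /Defs.recv4 (negbTE j_h) fix4_ws.
by rewrite /Defs.recv1 (negbTE j_h) /Defs.yv /= s3_ws.
Qed.

Lemma vote_many_s3 i : vote i -> #|B| < #|[set j | (j \notin B) && s3 j]|.
Proof.
rewrite /Defs.vote => votei; have := leq_trans votei (card_honest_part B (rec3 i)).
have -> : [set j | (j \notin B) && rec3 i j] = [set j | (j \notin B) && s3 j].
  by apply: eq_finset => j; case: (boolP (j \in B)) => //= j_h; rewrite rec3_honest.
lia.
Qed.

Lemma core_agreement : ba_ok d -> exists o, forall i, i \notin B -> core_out i = o.
Proof.
rewrite /Defs.core_out; case: d => ba; last by exists None.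
have [i0 i0_h vote_i0] : exists2 i, i \notin B & vote i.
  apply/exists_inP; apply: contraT => /exists_inPn no_vote.
  by have := ba false (fun i i_h => negbTE (no_vote i i_h)).
have /card_gt0P [j0] := leq_ltn_trans (leq0n _) (vote_many_s3 vote_i0).
rewrite inE => /andP [j0_h s3j0].
have s3_ws j : j \notin B -> s3 j -> w0 j = w0 j0.
  by move=> j_h s3j; apply: s3_consistent.
have fix4_ws j : j \notin B -> fix4 j = ev j (w0 j0).
  by move=> _; apply: fix4_honest s3_ws (vote_many_s3 vote_i0).
exists (Some (w0 j0)) => i i_h; case: ifP => [s3i | _]; first by rewrite s3_ws.
exact: decode4_honest.
Qed.

Lemma unanimous_s3 M : (forall i, i \notin B -> w0 i = M) -> forall i, i \notin B -> s3 i.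
Proof.
move=> unan.
have support (p : pred P) : (forall j, j \notin B -> p j) -> #|P| - t <= #|[set j | p j]|.
  move=> hp; apply: leq_trans (_ : #|~: B| <= _); first by rewrite card_honest; lia.
  by apply/subset_leq_card/subsetP => j; rewrite !inE; apply: hp.
have u1_h i j : i \notin B -> j \notin B -> u1 i j.
  by move=> i_h j_h; apply: u1_same_msg => //; rewrite !unan.
have s1_h i : i \notin B -> s1 i by move=> i_h; apply: support => j; apply: u1_h.
have s2_h i : i \notin B -> s2 i.
  move=> i_h; rewrite /Defs.s2 s1_h //=; apply: support => j j_h.
  by rewrite /Defs.u2 rec1_honest // s1_h // u1_h.
move=> i i_h; rewrite /Defs.s3 s2_h //=; apply: support => j j_h.
by rewrite /Defs.u3 /Defs.u2 rec1_honest // rec2_honest // s1_h // s2_h // u1_h.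
Qed.

Lemma core_validity M : (forall i, i \notin B -> w0 i = M) -> ba_ok d ->
  forall i, i \notin B -> core_out i = Some M.
Proof.
move=> unan ba; have s3_h := unanimous_s3 unan.
have -> : d = true.
  apply: ba => i _; rewrite /Defs.vote; apply: leq_trans (_ : #|~: B| <= _).
    by rewrite card_honest; lia.
  by apply/subset_leq_card/subsetP => j; rewrite !inE => j_h; rewrite rec3_honest // s3_h.
by move=> i i_h; rewrite /Defs.core_out s3_h // unan.
Qed.

Lemma core_broadcast M : ba_ok d -> exists o,
  (forall i, i \notin B -> core_out i = o) /\ ((forall i, i \notin B -> w0 i = M) -> o = Some M).
Proof.
move=> ba; have [o agree] := core_agreement ba; exists o; split=> // unan.
have /card_gt0P [i] : 0 < #|~: B| by rewrite card_honest; lia.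
by rewrite inE => i_h; rewrite -(agree i i_h) (core_validity unan ba).
Qed.

End CoreProtocol.

Lemma find_iota0_le (p : pred nat) N c : p c -> find p (iota 0 N) <= c.
Proof.
move=> pc; case: (ltnP c N) => [c_lt | N_le]; last first.
  by apply: leq_trans (find_size _ _) _; rewrite size_iota.
rewrite leqNgt; apply/negP => /(before_find 0); rewrite nth_iota // add0n.
by rewrite pc.
Qed.

Lemma kpar_gt t : t < 5 * kpar t.
Proof. rewrite /kpar; lia. Qed.

Lemma cval_le m t l e : m.+1 <= 2 ^ e -> cval m t l <= l %/ kpar t + 1 + 5 * e.
Proof.
move=> m_lt; set c := _ + _ + _; have k_gt0 : 0 < kpar t by rewrite /kpar addn1.
apply: find_iota0_le; apply/andP; split.
  apply: ltnW (leq_trans (ltn_ceil l k_gt0) _).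
  by rewrite mulnC leq_pmul2l // /c; lia.
apply: leq_trans (_ : (2 ^ e) ^ (t + 5) <= _); first by rewrite leq_exp2r ?addn_gt0 ?orbT.
rewrite -expnM leq_pexp2l //.
have t5_le : t + 5 <= 25 * kpar t by have := kpar_gt t; lia.
apply: leq_trans (leq_mul (leqnn e) t5_le) _.
have -> : e * (25 * kpar t) = 5 * kpar t * (5 * e) by rewrite mulnACA (mulnC e) -mulnA.
by rewrite leq_mul2l leq_addl orbT.
Qed.

Lemma cool_m_le n t C : cool_m n t C <= (C + 3) * t.+1.
Proof. by rewrite /cool_m; case: ifP => [small | _]; nia. Qed.

Lemma cool_m_lt_pow n t C : (cool_m n t C).+1 <= 2 ^ (C + trunc_log 2 t + 5).
Proof.
have t_lt := trunc_log_ltn t (isT : 1 < 2).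
have C_lt := ltn_expl (C + 4) (isT : 1 < 2).
apply: leq_trans (_ : (C + 4) * t.+1 <= _); first by have := cool_m_le n t C; lia.
rewrite (_ : C + _ + 5 = (C + 4) + (trunc_log 2 t).+1); last by lia.
by rewrite expnD leq_mul // ltnW.
Qed.

Lemma succ_mul_succ_log_le t l : 1 <= l ->
  t.+1 * (trunc_log 2 t).+1 <= 4 * (l + t * trunc_log 2 t).
Proof.
move=> l_gt0; case: (leqP t 1) => [t_le1 | t_gt1].
  have /eqP -> : trunc_log 2 t == 0 by rewrite trunc_log_eq0; lia.
  lia.
have : 0 < trunc_log 2 t by rewrite trunc_log_gt0.
move: (trunc_log 2 t) => tl tl_gt0; nia.
Qed.

(* From cool_m <= (C + 3) t.+1 and c.+1 <= l / k + (27 + 5 C) (log t).+1. *)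
Definition cost_const (C : nat) : nat := (C + 3) * (113 + 20 * C).

Lemma cool_cost_le n t l C : 1 <= l ->
  cool_m n t C * (cool_c n t l C).+1 <= cost_const C * (l + t * trunc_log 2 t).
Proof.
move=> l_gt0; set tl := trunc_log 2 t; set k := kpar t.
have c_le := cval_le t l (cool_m_lt_pow n t C); rewrite -/(cool_c n t l C) -/tl -/k in c_le.
have m_le := cool_m_le n t C.
have div_le : t.+1 * (l %/ k) <= 5 * l.
  apply: leq_trans (leq_mul (kpar_gt t) (leqnn _)) _.
  by rewrite -mulnA leq_mul2l mulnC leq_divM orbT.
have log_le := succ_mul_succ_log_le t l_gt0; rewrite -/tl in log_le.
have c_succ_le : (cool_c n t l C).+1 <= l %/ k + (27 + 5 * C) * tl.+1 by nia.
apply: leq_trans (leq_mul m_le c_succ_le) _; rewrite /cost_const; nia.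
Qed.

Lemma sum_le_card_mul (T : finType) (p : pred T) (f : T -> nat) b :
  (forall i, f i <= b) -> \sum_(i | p i) f i <= #|T| * b.
Proof.
move=> f_le; apply: (@leq_trans (\sum_(i | p i) b)); first exact: leq_sum.
by rewrite sum_nat_const leq_mul2r max_card orbT.
Qed.

Lemma core_bits_le {F : finFieldType} {k l t} {P : finType} {num alpha enc} {B : {set P}}
  {w0 A d c bab} :
  core_bits F k l t P num alpha enc B w0 A d c bab <= #|P| * (#|P| * (3 * c.+1)) + bab.
Proof.
rewrite leq_add2r; apply: sum_le_card_mul => i.
have := max_card [set j | ~~ rec3 F k l t P num alpha enc B w0 A i j & j != i].
by case: (_ && _); case: (_ && _); case: (d && _); nia.
Qed.

Lemma card_Qt n t : 3 * t + 1 <= n -> #|Qt n t| = 3 * t + 1.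
Proof.
move=> n_ge; have widen_inj : injective (widen_ord n_ge) by move=> i j [] /val_inj.
rewrite card_sig -[RHS](card_ord (3 * t + 1)) -(card_imset _ widen_inj).
apply: eq_card => i; rewrite !inE; apply/idP/imsetP => [i_lt | [j _ ->]]; last exact: (ltn_ord j).
by exists (Ordinal i_lt); last apply: val_inj.
Qed.

Lemma card_BQ n t (B : {set 'I_n}) : #|BQ n t B| <= #|B|.
Proof.
rewrite -(card_imset _ val_inj); apply/subset_leq_card/subsetP => i /imsetP [q].
by rewrite inE => q_B ->.
Qed.

Lemma cool_m_le_n n t C : 3 * t + 1 <= n -> cool_m n t C <= n.
Proof. by rewrite /cool_m; case: ifP. Qed.

Lemma cool_bits_le {n t l C L M B F alpha enc adv d baBits} : 3 * t + 1 <= n ->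
  cool_bits n t l C L M B F alpha enc adv d baBits
  <= n * l + 4 * (n * (cool_m n t C * (cool_c n t l C).+1)) + baBits (cool_m n t C) t.
Proof.
move=> n_ge; rewrite /cool_bits /cool_m; set c := cool_c n t l C.
have lead_le : (if L \in B then 0 else l * (n - 1)) <= n * l.
  by case: (L \in B) => //; rewrite mulnC leq_mul2r leq_subr orbT.
case: (n <= C * t).
  apply: leq_trans (leq_add lead_le core_bits_le) _.
  rewrite card_ord; nia.
have sum_le : \sum_(q in Qt n t | val q \notin B) (c + 1) * (n - (3 * t + 1))
              <= #|Qt n t| * (c.+1 * n).
  by apply: sum_le_card_mul => q; rewrite addn1 leq_mul2l leq_subr orbT.
rewrite addnA; apply: leq_trans (leq_add (leq_add lead_le core_bits_le) sum_le) _.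
rewrite card_Qt //; nia.
Qed.

Lemma cool_bits_bound {n t l C L M B F alpha enc adv d Kb baBits} :
  (forall m t, baBits m t <= Kb * m * t.+1) -> 1 <= l -> 3 * t + 1 <= n ->
  cool_bits n t l C L M B F alpha enc adv d baBits
  <= 2 * (1 + 4 * cost_const C + 4 * Kb) * maxn (n * l) (n * t * trunc_log 2 t).
Proof.
move=> baBits_le l_gt0 n_ge; set W := l + t * trunc_log 2 t.
have cost := cool_cost_le n t C l_gt0; rewrite -/W in cost.
have t_le : t.+1 <= 4 * W.
  by apply: leq_trans (succ_mul_succ_log_le t l_gt0); rewrite leq_pmulr.
have ba_le : baBits (cool_m n t C) t <= Kb * n * (4 * W).
  by apply: leq_trans (baBits_le _ _) _; rewrite leq_mul // leq_mul2l cool_m_le_n ?orbT.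
have nW_le : n * W <= 2 * maxn (n * l) (n * t * trunc_log 2 t) by rewrite /W; lia.
apply: leq_trans (cool_bits_le n_ge) _.
apply: leq_trans (_ : _ <= (1 + 4 * cost_const C + 4 * Kb) * (n * W)) _; last first.
  by rewrite [2 * _]mulnC -mulnA leq_mul2l nW_le orbT.
have := leq_mul (leqnn n) cost; nia.
Qed.

Lemma cool_rounds_le {n t C Kb baRounds} :
  (forall m t, baRounds m t <= Kb * t.+1) -> cool_rounds n t C baRounds <= (7 + Kb) * t.+1.
Proof.
move=> baRounds_le; have := baRounds_le n t; have := baRounds_le (3 * t + 1) t.
by rewrite /cool_rounds; case: ifP => _; nia.
Qed.

Lemma ev_agreement (F : finFieldType) l t (P : finType) num alpha
    (enc : msg l -> 'rV[F]_(kpar t)) m :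
  {in [pred i | i < m] &, injective alpha} -> (forall p, num p < m) -> injective num ->
  kpar t <= m -> injective enc -> forall x y, x != y ->
  #|[set p | ev F (kpar t) l P num alpha enc p x == ev F (kpar t) l P num alpha enc p y]|
  <= t %/ 5.
Proof.
move=> alpha_inj num_lt num_inj k_le enc_inj x y /(contra_neq (@enc_inj x y)) enc_neq.
have ev_rs p z : ev F (kpar t) l P num alpha enc p z = (rs_poly alpha (enc z)).[alpha (num p)]%R.
  by rewrite horner_rs_poly.
under eq_finset => p do rewrite !ev_rs.
rewrite -ltnS; apply: leq_trans (rs_agreement alpha_inj k_le num_lt num_inj enc_neq) _.
by rewrite /kpar addn1.
Qed.

Section Subcommittee.
Variables (n t l C : nat) (L : 'I_n) (M : msg l) (B : {set 'I_n}) (F : finFieldType)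
  (alpha : nat -> F) (enc : msg l -> 'rV[F]_(kpar t)) (adv : CoolAdv F n t l) (d : bool).
Hypotheses (n_ge : 3 * t + 1 <= n) (B_le : #|B| <= t).

Local Notation evQ := (ev F (kpar t) l (Qt n t) (numQ n t) alpha enc).
Hypothesis evQ_agree : forall x y, x != y -> #|[set q | evQ q x == evQ q y]| <= t %/ 5.

Lemma card_Qt_ge : 3 * t + 1 <= #|Qt n t|.
Proof. by rewrite card_Qt. Qed.

Lemma card_BQ_le : #|BQ n t B| <= t.
Proof. exact: leq_trans (card_BQ t B) B_le. Qed.

Lemma outsider_out_eq o i :
  (forall q : Qt n t, val q \notin B -> coreQ_out n t l L M B F alpha enc adv d q = o) ->
  outsider_out n t l L M B F alpha enc adv d i = o.
Proof.
move=> honest_o; rewrite /outsider_out.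
under eq_pick => x do under eq_finset => q do rewrite eq_sym.
have honest_recv (q : Qt n t) : q \notin BQ n t B ->
  (if val q \in B then a5 adv q i else omap (evQ q) (coreQ_out n t l L M B F alpha enc adv d q))
  = omap (evQ q) o.
  by rewrite inE => q_h; rewrite (negbTE q_h) honest_o.
case: o honest_o honest_recv => [x0 | ] _ honest_recv.
  apply: (threshold_decode_codeword card_BQ_le card_Qt_ge) => [x y | q /honest_recv -> //].
  by move=> /evQ_agree; apply: leq_trans; apply/subset_leq_card/subsetP => q; rewrite !inE.
by apply: (threshold_decode_none card_BQ_le card_Qt_ge) => // q x /honest_recv ->.
Qed.

End Subcommittee.

Lemma cool_correct C n t l (L : 'I_n) (M : msg l) (B : {set 'I_n}) (F : finFieldType)
  (alpha : nat -> F) (enc : msg l -> 'rV[F]_(kpar t)) (adv : CoolAdv F n t l) (d : bool) :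
  3 * t + 1 <= n -> #|B| <= t -> {in [pred i | i < cool_m n t C] &, injective alpha} ->
  injective enc -> cool_ba_ok n t l C L M B F alpha enc adv d ->
  exists o, (forall i, i \notin B -> cool_out n t l C L M B F alpha enc adv d i = o)
            /\ (L \notin B -> o = Some M).
Proof.
move=> n_ge B_le + enc_inj; have k_le : kpar t <= 3 * t + 1 by rewrite /kpar; lia.
rewrite /cool_m /cool_ba_ok /cool_out; case: (n <= C * t) => alpha_inj ba.
  have agree := ev_agreement alpha_inj (@ltn_ord n) (@ord_inj n) (leq_trans k_le n_ge) enc_inj.
  have P_ge : 3 * t + 1 <= #|'I_n| by rewrite card_ord.
  have [o [honest_o valid_o]] := core_broadcast P_ge B_le agree M ba.
  by exists o; split=> // L_h; apply: valid_o => i _; rewrite /w0 (negbTE L_h).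
have numQ_inj : injective (numQ n t) by move=> q q' /val_inj /val_inj.
have numQ_lt (q : Qt n t) : numQ n t q < 3 * t + 1 := valP q.
have agree := ev_agreement alpha_inj numQ_lt numQ_inj k_le enc_inj.
have [o [honest_o valid_o]] := core_broadcast (card_Qt_ge n_ge) (card_BQ_le B_le) agree M ba.
have honest_Q (q : Qt n t) : val q \notin B -> coreQ_out n t l L M B F alpha enc adv d q = o.
  by move=> q_h; apply: honest_o; rewrite inE.
exists o; split; last by move=> L_h; apply: valid_o => q _; rewrite /w0Q /w0 (negbTE L_h).
move=> i i_h; case: insubP => [q _ q_i | _]; first by apply: honest_Q; rewrite q_i.
exact: outsider_out_eq.
Qed.

Theorem theorem2 (C Kb : nat) (baRounds baBits : nat -> nat -> nat)
  (hR : forall m t : nat, (baRounds m t <= Kb * t.+1)%N)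
  (hB : forall m t : nat, (baBits m t <= Kb * m * t.+1)%N) :
  exists K : nat,
  forall (n t l : nat), (1 <= n)%N -> (1 <= l)%N -> (3 * t + 1 <= n)%N ->
  forall (L : 'I_n) (M : msg l) (B : {set 'I_n}), (#|B| <= t)%N ->
  forall (F : finFieldType) (alpha : nat -> F) (enc : msg l -> 'rV[F]_(kpar t)),
    #|F| = (2 ^ cool_c n t l C)%N ->
    {in [pred i : nat | (i < cool_m n t C)%N] &, injective alpha} ->
    (forall i : nat, (i < cool_m n t C)%N -> alpha i != 0%R) ->
    injective enc ->
  forall (adv : CoolAdv F n t l) (d : bool),
    cool_ba_ok n t l C L M B F alpha enc adv d ->
    (* consistency *)
    (forall i j : 'I_n, i \notin B -> j \notin B ->
       cool_out n t l C L M B F alpha enc adv d i = cool_out n t l C L M B F alpha enc adv d j) /\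
    (* validity *)
    (L \notin B -> forall i : 'I_n, i \notin B ->
       cool_out n t l C L M B F alpha enc adv d i = Some M) /\
    (* O(t) rounds *)
    (cool_rounds n t C baRounds <= K * t.+1)%N /\
    (* O(max{n l, n t log t}) bits *)
    (cool_bits n t l C L M B F alpha enc adv d baBits <= K * maxn (n * l) (n * t * trunc_log 2 t))%N.
Proof.
exists ((7 + Kb) + 2 * (1 + 4 * cost_const C + 4 * Kb)).
move=> n t l _ l_gt0 n_ge L M B B_le F alpha enc _ alpha_inj _ enc_inj adv d ba.
have [o [honest_o valid_o]] := cool_correct n_ge B_le alpha_inj enc_inj ba.
split; first by move=> i j i_h j_h; rewrite !honest_o.
split; first by move=> L_h i i_h; rewrite honest_o // valid_o.
split.
  by apply: leq_trans (cool_rounds_le hR) _; rewrite leq_mul2r leq_addr orbT.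
apply: leq_trans (cool_bits_bound hB l_gt0 n_ge) _.
by rewrite leq_mul2r leq_addl orbT.
Qed.
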